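(* Let $n\geq 2$ and let $0<k_1<k_2<\cdots<k_r<n$ be integers; put $k_0=0$. Let $$\mathcal{W}^{\Theta}=\{w\in S_n:\ w(1)<\cdots<w(k_1),\ w(k_1+1)<\cdots<w(k_2),\ \dots,\ w(k_r+1)<\cdots<w(n)\}.$$ For $w\in\mathcal{W}^{\Theta}$ with code $\alpha=(\alpha_1,\dots,\alpha_{n-1})$, and for each $j\in\{1,\dots,r\}$, the sequence $\lambda^j(w)=(\alpha_{k_j},\alpha_{k_j-1},\dots,\alpha_{k_{j-1}+1})$ is a partition whose Ferrers diagram fits in a $(k_j-k_{j-1})\times(n-k_j)$ rectangle (at most $k_j-k_{j-1}$ parts, each at most $n-k_j$), and the map $w\mapsto(\lambda^1(w),\dots,\lambda^r(w))$ is a bijection from $\mathcal{W}^{\Theta}$ onto $\prod_{j=1}^{r}\mathcal{P}_j$, where $\mathcal{P}_j$ is the set of partitions whose Ferrers diagram fits in a $(k_j-k_{j-1})\times(n-k_j)$ rectangle.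
   Context: Permutations $w\in S_n$ are written in one-line notation $w=w(1)\cdots w(n)$. The code of $w$ is $\alpha=(\alpha_1,\dots,\alpha_{n-1})$ with $\alpha_i=\#\{k>i:\ w(k)<w(i)\}$. A partition is a weakly decreasing finite sequence of nonnegative integers (zeros allowed/ignored). *)

From mathcomp Require Import all_boot all_fingroup.
Set Implicit Arguments. Unset Strict Implicit. Unset Printing Implicit Defensive.

(* One-line notation, 1-based: wval w i = w(i) in {1..n} for 1 <= i <= n.
   A permutation w : 'S_n acts on 'I_n = {0..n-1}; w(i) := (w (i-1)) + 1. *)
Definition wval (n : nat) (w : 'S_n) (i : nat) : nat :=
  nth 0 [seq (val (w j)).+1 | j <- enum 'I_n] i.-1.

Definition code_entry (n : nat) (w : 'S_n) (i : nat) : nat :=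
  count (fun k => wval w k < wval w i) (iota i.+1 (n - i)).

Definition code (n : nat) (w : 'S_n) : seq nat :=
  [seq code_entry w i | i <- iota 1 n.-1].

Definition alpha (n : nat) (w : 'S_n) (i : nat) : nat := nth 0 (code w) i.-1.

(* block boundaries: bnd n ks 0 = k_0 = 0, bnd n ks j = k_j (1<=j<=r),
   bnd n ks (r+1) = n *)
Definition bnd (n : nat) (ks : seq nat) (j : nat) : nat := nth n (0 :: ks) j.

Definition in_W (n : nat) (ks : seq nat) (w : 'S_n) : Prop :=
  forall j, j <= size ks ->
    forall i, bnd n ks j < i -> i < bnd n ks j.+1 -> wval w i < wval w i.+1.

Definition lambda (n : nat) (ks : seq nat) (w : 'S_n) (j : nat) : seq nat :=
  [seq alpha w i | i <- rev (iota (bnd n ks j.-1).+1 (bnd n ks j - bnd n ks j.-1))].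

Definition is_partition (s : seq nat) : bool := sorted geq s.

(* canonical representative of a partition: zeros ignored (removed) *)
Definition parts (s : seq nat) : seq nat := [seq x <- s | 0 < x].

Definition fits_in (a b : nat) (s : seq nat) : bool :=
  (size (parts s) <= a) && all (fun x => x <= b) s.

(* P_j, on canonical representatives (partitions without zero parts) *)
Definition in_P (n : nat) (ks : seq nat) (j : nat) (mu : seq nat) : bool :=
  [&& is_partition mu, all (fun x => 0 < x) mu &
      fits_in (bnd n ks j - bnd n ks j.-1) (n - bnd n ks j) mu].

Definition lambda_map (n : nat) (ks : seq nat) (w : 'S_n) : seq (seq nat) :=
  [seq parts (lambda ks w j) | j <- iota 1 (size ks)].

From mathcomp Require Import all_boot all_fingroup zify.
Set Implicit Arguments. Unset Strict Implicit. Unset Printing Implicit Defensive.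

(* The Lehmer code is a bijection between the orderings s of [1..n] and the
   sequences c with c_i < n - i, and s ascends at i exactly when c_i <= c_(i+1).
   So w is increasing on a block iff its code is weakly increasing there, i.e.
   iff lambda^j, the reversed code of block j, is a partition; its largest entry
   sits at the last position k_j of the block and is at most n - k_j. On the last
   block the code must vanish, so a family of partitions in the boxes determines
   the whole code, hence w, and every such family arises. *)

Definition lehmer (s : seq nat) (i : nat) : nat :=
  count (fun y => y < nth 0 s i) (drop i.+1 s).

Lemma lehmer_ub s i : lehmer s i <= size s - i.+1.
Proof. by rewrite /lehmer -size_drop count_size. Qed.

Lemma lehmer_ascent s i : i.+1 < size s ->
  nth 0 s i < nth 0 s i.+1 -> lehmer s i <= lehmer s i.+1.
Proof.
move=> lt_i1s lt_si; rewrite /lehmer (drop_nth 0 lt_i1s) /= ltnNge (ltnW lt_si).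
by apply: sub_count => y /= lt_y; apply: ltn_trans lt_y lt_si.
Qed.

Lemma lehmer_ascentP s i : uniq s -> i.+1 < size s ->
  (nth 0 s i < nth 0 s i.+1) = (lehmer s i <= lehmer s i.+1).
Proof.
move=> uniq_s lt_i1s; apply/idP/idP; first exact: lehmer_ascent.
have neq_s : nth 0 s i != nth 0 s i.+1.
  by rewrite nth_uniq // ?ltn_eqF // ltnW.
case: ltngtP neq_s => // lt_si _.
rewrite /lehmer (drop_nth 0 lt_i1s) /= lt_si add1n.
rewrite ltnNge sub_count // => y /= lt_y; exact: ltn_trans lt_y lt_si.
Qed.

Lemma lehmer_run_le s p q : q < size s ->
  (forall i, p <= i < q -> nth 0 s i < nth 0 s i.+1) ->
  p <= q -> lehmer s p <= lehmer s q.
Proof.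
elim: q => [|q IHq] lt_qs asc; first by rewrite leqn0 => /eqP ->.
rewrite leq_eqVlt ltnS => /orP [/eqP -> // | le_pq].
apply: leq_trans (IHq (ltnW lt_qs) _ le_pq) (lehmer_ascent lt_qs _).
  by move=> i /andP [le_pi lt_iq]; apply: asc; rewrite le_pi ltnW.
by apply: asc; rewrite le_pq /=.
Qed.

Lemma count_lt_mem_mono x y u : x < y -> x \in u ->
  count (fun z => z < x) u < count (fun z => z < y) u.
Proof.
elim: u => [//|z u IHu] lt_xy /=; rewrite inE => /orP [/eqP <- | xu].
  rewrite ltnn lt_xy add0n add1n ltnS.
  by apply: sub_count => v /= lt_vx; apply: ltn_trans lt_vx lt_xy.
rewrite -addnS; apply: leq_add; last exact: IHu.
by case: ltnP => //= lt_zx; rewrite (ltn_trans lt_zx lt_xy).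
Qed.

Lemma count_lt_mem_inj x y u : x \in u -> y \in u ->
  count (fun z => z < x) u = count (fun z => z < y) u -> x = y.
Proof.
move=> xu yu eq_cnt; case: (ltngtP x y) => // [lt_xy | lt_yx].
- by have := count_lt_mem_mono lt_xy xu; rewrite eq_cnt ltnn.
- by have := count_lt_mem_mono lt_yx yu; rewrite eq_cnt ltnn.
Qed.

Lemma lehmer_inj s t : uniq s -> perm_eq s t ->
  (forall i, i < size s -> lehmer s i = lehmer t i) -> s = t.
Proof.
elim: s t => [|x s IHs] [|y t] //= => [_ /perm_size | _ /perm_size | ] //.
move=> /andP [_ uniq_s] pst eq_code.
have eq_xy : x = y.
  have := eq_code 0 isT; rewrite /lehmer /= !drop0 => eq_code0.
  apply: (count_lt_mem_inj (mem_head x s)); first by rewrite (perm_mem pst) mem_head.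
  by rewrite [RHS](seq.permP pst) /= !ltnn eq_code0.
subst y; congr (_ :: _); apply: IHs => //; first by rewrite perm_cons in pst.
by move=> i lt_is; apply: (eq_code i.+1).
Qed.

Lemma count_lt_nth_sorted u a : sorted ltn u -> a < size u ->
  count (fun y => y < nth 0 u a) u = a.
Proof.
elim: u a => [//|z u IHu] a /= path_zu.
have min_z := order_path_min ltn_trans path_zu.
have count_lt_z : count (fun y => y < z) u = 0.
  apply/eqP; rewrite -leqn0 leqNgt -has_count; apply/hasPn => y yu.
  by rewrite -leqNgt ltnW //; apply: (allP min_z).
case: a => [|a] lt_a /=; first by rewrite ltnn count_lt_z.
by rewrite (allP min_z) ?mem_nth // IHu // (path_sorted path_zu).
Qed.

Lemma lehmer_exists S (f : nat -> nat) : uniq S ->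
  (forall i, i < size S -> f i < size S - i) ->
  exists2 s, perm_eq s S & forall i, i < size S -> lehmer s i = f i.
Proof.
move Hm : (size S) => m; elim: m S f Hm => [|m IHm] S f size_S uniq_S f_ub.
  by case: S size_S uniq_S f_ub => // *; exists [::].
set u := sort leq S.
have sorted_u : sorted ltn u.
  by rewrite ltn_sorted_uniq_leq sort_uniq uniq_S sort_sorted //; apply: leq_total.
have size_u : size u = m.+1 by rewrite size_sort.
have lt_f0 : f 0 < m.+1 by rewrite -[m.+1]subn0 f_ub.
set x := nth 0 u (f 0).
have xS : x \in S by rewrite -(mem_sort leq) mem_nth // size_u.
have [s' perm_s' lehmer_s'] : exists2 s', perm_eq s' (rem x S) &
    forall i, i < m -> lehmer s' i = f i.+1.
  apply: (IHm _ (fun i => f i.+1)); rewrite ?rem_uniq // ?size_rem ?size_S // => i lt_im.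
  by rewrite -subSS f_ub.
exists (x :: s').
  by rewrite perm_sym (perm_trans (perm_to_rem xS)) // perm_cons perm_sym.
case=> [|i] lt_i /=; last exact: lehmer_s'.
rewrite /lehmer /= drop0 (seq.permP perm_s') count_rem xS ltnn subn0.
by rewrite -(seq.permP (permEl (perm_sort leq S))) count_lt_nth_sorted // size_u.
Qed.

Lemma nth_parts s i : is_partition s -> nth 0 (parts s) i = nth 0 s i.
Proof.
elim: s i => [//|[|x] s IHs] i /= path_s; last first.
  by case: i => //= i; apply/IHs/(path_sorted path_s).
have /all_pred1P -> : all (pred1 0) s.
  by apply: sub_all (order_path_min (rev_trans leq_trans) path_s) => y; rewrite /= leqn0.
by rewrite /parts filter_nseq /= nth_nil; case: i => //= i; rewrite nth_nseq if_same.
Qed.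

Lemma partition_parts a b s : is_partition s -> fits_in a b s ->
  [&& is_partition (parts s), all (fun x => 0 < x) (parts s) & fits_in a b (parts s)].
Proof.
move=> part_s /andP [size_s all_s]; rewrite /is_partition /fits_in /parts.
rewrite sorted_filter ?filter_all ?filter_id ?size_s //=; last exact: rev_trans leq_trans.
by rewrite all_filter; apply: sub_all all_s => x /= ->; rewrite implybT.
Qed.

Lemma eq_from_nth_pos a x y : all (fun z => 0 < z) x -> all (fun z => 0 < z) y ->
  size x <= a -> size y <= a -> (forall q, q < a -> nth 0 x q = nth 0 y q) -> x = y.
Proof.
move=> pos_x pos_y size_x size_y eq_xy.
have nth_pos z q : all (fun z => 0 < z) z -> q < size z -> 0 < nth 0 z q.
  by move=> pos_z lt_q; apply: (allP pos_z); rewrite mem_nth.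
apply: (@eq_from_nth _ 0) => [|q lt_q]; last by rewrite eq_xy ?(leq_trans lt_q).
case: (ltngtP (size x) (size y)) => // lt_size.
- have := nth_pos _ _ pos_y lt_size.
  by rewrite -eq_xy ?nth_default // (leq_trans lt_size).
- have := nth_pos _ _ pos_x lt_size.
  by rewrite eq_xy ?nth_default // (leq_trans lt_size).
Qed.

Definition oneline n (w : 'S_n) : seq nat := [seq (val (w j)).+1 | j <- enum 'I_n].

Lemma size_oneline n (w : 'S_n) : size (oneline w) = n.
Proof. by rewrite size_map size_enum_ord. Qed.

Lemma nth_oneline n (w : 'S_n) (j : 'I_n) : nth 0 (oneline w) j = (val (w j)).+1.
Proof. by rewrite (nth_map j) ?size_enum_ord // nth_ord_enum. Qed.

Lemma oneline_uniq n (w : 'S_n) : uniq (oneline w).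
Proof. by rewrite map_inj_uniq ?enum_uniq // => i j [] /val_inj /perm_inj. Qed.

Lemma perm_oneline n (w : 'S_n) : perm_eq (oneline w) (iota 1 n).
Proof.
apply: uniq_perm; rewrite ?oneline_uniq ?iota_uniq //.
have [] // := uniq_min_size (oneline_uniq w) (s2 := iota 1 n).
- by move=> x /mapP [j _ ->]; rewrite mem_iota add1n !ltnS ltn_ord.
- by rewrite size_oneline size_iota.
Qed.

Lemma oneline_inj n : injective (@oneline n).
Proof.
move=> w1 w2 eq_w; apply/permP => j; apply: val_inj.
by have := nth_oneline w1 j; rewrite eq_w nth_oneline => -[].
Qed.

Lemma oneline_surj n s : perm_eq s (iota 1 n) -> exists w : 'S_n, oneline w = s.
Proof.
move=> perm_s.
have size_s : size s = n by rewrite (perm_size perm_s) size_iota.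
have uniq_s : uniq s by rewrite (perm_uniq perm_s) iota_uniq.
have nth_s (j : 'I_n) : 0 < nth 0 s j <= n.
  have : nth 0 s j \in iota 1 n by rewrite -(perm_mem perm_s) mem_nth ?size_s.
  by rewrite mem_iota add1n ltnS.
pose f (j : 'I_n) : 'I_n := insubd j (nth 0 s j).-1.
have val_f j : val (f j) = (nth 0 s j).-1.
  by rewrite val_insubd; case/andP: (nth_s j) => gt0 le_n; rewrite prednK // le_n.
have f_inj : injective f.
  move=> i j /(congr1 val); rewrite !val_f => /(congr1 succn).
  rewrite !prednK; try by case/andP: (nth_s i); try by case/andP: (nth_s j).
  by move/eqP; rewrite nth_uniq ?size_s // => /eqP /val_inj.
exists (perm f_inj); apply: (@eq_from_nth _ 0) => [|i]; rewrite size_oneline ?size_s // => lt_in.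
rewrite (nth_oneline _ (Ordinal lt_in)) permE val_f prednK //.
by case/andP: (nth_s (Ordinal lt_in)).
Qed.

Lemma alpha_lehmer n (w : 'S_n) i : 0 < i < n -> alpha w i = lehmer (oneline w) i.-1.
Proof.
case: i => [//|p] /= lt_pn.
have lt_p : p < n.-1 by rewrite -ltnS prednK // (ltn_trans _ lt_pn).
rewrite /alpha /code (nth_map 0) ?size_iota // nth_iota // add1n /code_entry /lehmer.
rewrite -[drop p.+1 _](take_oversize (leqnn _)) size_drop size_oneline.
rewrite -(map_nth_iota 0) ?size_oneline // count_map /=.
by rewrite -[p.+2]add1n iotaDl count_map.
Qed.

Lemma nth_partition_le s i j : is_partition s -> i <= j -> nth 0 s j <= nth 0 s i.
Proof.
move=> part_s le_ij; case: (ltnP j (size s)) => lt_j; last by rewrite nth_default.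
apply: (sorted_leq_nth (rev_trans leq_trans) (fun x => leqnn x) 0 part_s) => //.
by rewrite inE (leq_ltn_trans le_ij lt_j).
Qed.

Section Blocks.

Variables (n : nat) (ks : seq nat).
Hypotheses (n_gt0 : 0 < n) (ks_sorted : sorted ltn (0 :: ks))
  (ks_lt_n : all (fun k => k < n) ks).

Local Notation b := (bnd n ks).

Lemma bnd_ltS j : j <= size ks -> b j < b j.+1.
Proof.
rewrite /bnd leq_eqVlt => /orP [/eqP -> | lt_j]; last first.
  apply: (sorted_ltn_nth ltn_trans n ks_sorted) => //; rewrite inE /= ltnS //.
  exact: ltnW.
rewrite [nth n _ (size ks).+1]nth_default //.
have : nth n (0 :: ks) (size ks) \in 0 :: ks by rewrite mem_nth.
by rewrite inE => /predU1P [-> // | /(allP ks_lt_n)].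
Qed.

Lemma bnd_homo : {homo b : i j / i <= j}.
Proof.
apply: homo_leq leqnn leq_trans _ => j.
case: (leqP j (size ks)) => [/bnd_ltS/ltnW // | lt_j].
by rewrite /bnd !nth_default //= ltnW.
Qed.

Lemma bnd_le_n j : b j <= n.
Proof.
apply: leq_trans (bnd_homo (leq_addr (size ks).+1 j)) _.
by rewrite /bnd nth_default //= leq_addl.
Qed.

Lemma bnd_lt_n j : j <= size ks -> b j < n.
Proof. by move=> le_j; apply: leq_trans (bnd_ltS le_j) (bnd_le_n _). Qed.

Definition block p := find (fun k => p < k) ks.

Lemma blockP p : p < n -> b (block p) <= p < b (block p).+1.
Proof.
move=> lt_pn; apply/andP; split.
  case E: (block p) => [//|m]; rewrite /bnd /= leqNgt.
  by have := @before_find _ n (fun k => p < k) ks m; rewrite -/(block p) E ltnSn => ->.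
rewrite /bnd /=; case: (ltnP (block p) (size ks)) => [lt_b | ge_b].
  by apply: (@nth_find _ n (fun k => p < k)); rewrite has_find.
by rewrite nth_default.
Qed.

Lemma block_eq j p : b j <= p < b j.+1 -> block p = j.
Proof.
move=> /andP [le_jp lt_pj].
have /andP [le_bp lt_pb] := blockP (leq_trans lt_pj (bnd_le_n _)).
case: (ltngtP (block p) j) => // [lt_bj | lt_jb].
- by have := leq_trans (bnd_homo lt_bj) le_jp; rewrite leqNgt lt_pb.
- by have := leq_trans (bnd_homo lt_jb) le_bp; rewrite leqNgt lt_pj.
Qed.

Lemma in_W_ascentP (w : 'S_n) : in_W ks w <->
  (forall j p, b j <= p -> p.+1 < b j.+1 -> nth 0 (oneline w) p < nth 0 (oneline w) p.+1).
Proof.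
split=> asc j.
  move=> p le_jp lt_pj; apply: (asc j _ p.+1 le_jp lt_pj).
  rewrite leqNgt; apply/negP => lt_j.
  have bj_n : b j = n by rewrite /bnd nth_default.
  have bj1_n : b j.+1 = n by rewrite /bnd nth_default //= ltnW.
  by have := leq_ltn_trans le_jp (ltnW lt_pj); rewrite bj_n bj1_n ltnn.
by move=> _ [|p] // lt_jp lt_pj; apply: (asc j p).
Qed.

Definition block_code (w : 'S_n) j : seq nat :=
  [seq lehmer (oneline w) p | p <- iota (b j) (b j.+1 - b j)].

Lemma lambdaE (w : 'S_n) j : j < size ks -> lambda ks w j.+1 = rev (block_code w j).
Proof.
move=> lt_j; rewrite /lambda /block_code /= map_rev; congr rev.
rewrite -[(b j).+1]add1n iotaDl -map_comp; apply/eq_in_map => p.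
rewrite mem_iota => /andP [_ lt_p] /=; rewrite alpha_lehmer //.
have := bnd_lt_n lt_j; have := bnd_ltS (ltnW lt_j); lia.
Qed.

Lemma nth_lambda_map (w : 'S_n) j : j < size ks ->
  nth [::] (lambda_map ks w) j = parts (lambda ks w j.+1).
Proof. by move=> lt_j; rewrite /lambda_map (nth_map 0) ?size_iota // nth_iota. Qed.

Definition in_prod_P (mus : seq (seq nat)) : Prop :=
  size mus = size ks /\ forall j, j < size ks -> in_P n ks j.+1 (nth [::] mus j).

(* Inverse of [lambda_map]: position [p] lies in block [block p], whose partition
   lists the Lehmer code of that block backwards (padded with zeros). *)
Definition decode (mus : seq (seq nat)) p : nat :=
  nth 0 (nth [::] mus (block p)) (b (block p).+1 - p.+1).

Section PermutationInW.

Variable w : 'S_n.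
Hypothesis wW : in_W ks w.

Local Notation s := (oneline w).

Lemma lehmer_block_homo j p q : b j <= p -> p <= q -> q < b j.+1 ->
  lehmer s p <= lehmer s q.
Proof.
move=> le_jp le_pq lt_qj; apply: lehmer_run_le => //.
  by rewrite size_oneline (leq_trans lt_qj (bnd_le_n _)).
move=> i /andP [le_pi lt_iq]; apply: ((in_W_ascentP w).1 wW j).
  exact: leq_trans le_jp le_pi.
exact: leq_ltn_trans lt_iq lt_qj.
Qed.

Lemma lehmer_block_ub j p : b j <= p < b j.+1 -> lehmer s p <= n - b j.+1.
Proof.
move=> /andP [le_jp lt_pj].
have le_last : p <= (b j.+1).-1 by rewrite -ltnS prednK // (leq_ltn_trans _ lt_pj).
apply: leq_trans (lehmer_block_homo le_jp le_last _) _.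
  by rewrite prednK // (leq_ltn_trans _ lt_pj).
by rewrite (leq_trans (lehmer_ub _ _)) // size_oneline prednK // (leq_ltn_trans _ lt_pj).
Qed.

Lemma lambda_partition j : j < size ks ->
  is_partition (lambda ks w j.+1) /\ fits_in (b j.+1 - b j) (n - b j.+1) (lambda ks w j.+1).
Proof.
move=> lt_j; rewrite lambdaE //; split.
  rewrite /is_partition rev_sorted.
  apply: (homo_sorted_in (P := fun p => b j <= p < b j.+1)) (iota_sorted _ _).
    move=> p q /andP [le_jp _] /andP [_ lt_qj] le_pq; exact: lehmer_block_homo le_jp le_pq lt_qj.
  apply/allP => p; rewrite mem_iota subnKC //; exact/ltnW/bnd_ltS/ltnW.
apply/andP; split.
  by rewrite size_filter (leq_trans (count_size _ _)) // size_rev size_map size_iota.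
apply/allP => x; rewrite mem_rev => /mapP [p]; rewrite mem_iota subnKC => [range_p ->|].
  exact: lehmer_block_ub.
exact/ltnW/bnd_ltS/ltnW.
Qed.

Lemma lambda_map_in_prod_P : in_prod_P (lambda_map ks w).
Proof.
split=> [|j lt_j]; first by rewrite size_map size_iota.
rewrite nth_lambda_map //; have [part_j fits_j] := lambda_partition lt_j.
exact: partition_parts.
Qed.

Lemma lehmer_decode p : p < n -> lehmer s p = decode (lambda_map ks w) p.
Proof.
move=> lt_pn; rewrite /decode; have := blockP lt_pn; move: (block p) => j range_p.
have /andP [le_jp lt_pj] := range_p.
case: (ltnP j (size ks)) => [lt_j | ge_j].
  have [part_j _] := lambda_partition lt_j.
  rewrite nth_lambda_map // nth_parts // lambdaE // /block_code nth_rev size_map size_iota; last lia.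
  rewrite (nth_map 0) ?size_iota; last lia.
  by rewrite nth_iota; [congr lehmer | ]; lia.
rewrite [nth [::] _ j]nth_default ?nth_nil; last by rewrite size_map size_iota.
apply/eqP; rewrite -leqn0; have := lehmer_block_ub range_p.
by rewrite /bnd nth_default //= subnn.
Qed.

End PermutationInW.

Lemma lambda_map_inj (w1 w2 : 'S_n) : in_W ks w1 -> in_W ks w2 ->
  lambda_map ks w1 = lambda_map ks w2 -> w1 = w2.
Proof.
move=> w1W w2W eq_lambda; apply/oneline_inj/lehmer_inj.
- exact: oneline_uniq.
- by rewrite (perm_trans (perm_oneline w1)) // perm_sym perm_oneline.
by move=> p; rewrite size_oneline => lt_pn; rewrite !lehmer_decode // eq_lambda.
Qed.

Section Decode.

Variable mus : seq (seq nat).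
Hypothesis mus_P : in_prod_P mus.

Lemma nth_prod_P j : is_partition (nth [::] mus j) /\ all (fun x => x <= n - b j.+1) (nth [::] mus j).
Proof.
case: (ltnP j (size ks)) => [lt_j | ge_j]; last by rewrite nth_default ?mus_P.1.
by have /and3P [part_j _ /andP [_ ub_j]] := mus_P.2 j lt_j.
Qed.

Lemma decode_ub p : p < n -> decode mus p < n - p.
Proof.
move=> lt_pn; have /andP [_ lt_pb] := blockP lt_pn; rewrite /decode.
set j := block p in lt_pb *; set mu := nth [::] mus j.
have le_mu : nth 0 mu (b j.+1 - p.+1) <= n - b j.+1.
  case: (ltnP (b j.+1 - p.+1) (size mu)) => [lt_q | ge_q]; last by rewrite nth_default.
  by apply: (allP (nth_prod_P j).2); rewrite mem_nth.
by apply: leq_ltn_trans le_mu _; have := bnd_le_n j.+1; lia.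
Qed.

Lemma decode_ascent j p : b j <= p -> p.+1 < b j.+1 -> decode mus p <= decode mus p.+1.
Proof.
move=> le_jp lt_pj; rewrite /decode !(@block_eq j); try lia.
by apply: nth_partition_le (nth_prod_P j).1 _; lia.
Qed.

End Decode.

Lemma decode_inj mus1 mus2 : in_prod_P mus1 -> in_prod_P mus2 ->
  (forall p, p < n -> decode mus1 p = decode mus2 p) -> mus1 = mus2.
Proof.
move=> [size1 P1] [size2 P2] eq_decode.
apply: (@eq_from_nth _ [::]) => [|j]; rewrite ?size1 ?size2 // => lt_j.
have /and3P [_ pos1 /andP [size_mu1 _]] := P1 j lt_j.
have /and3P [_ pos2 /andP [size_mu2 _]] := P2 j lt_j.
rewrite /parts (all_filterP pos1) in size_mu1.
rewrite /parts (all_filterP pos2) in size_mu2.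
apply: (eq_from_nth_pos pos1 pos2 size_mu1 size_mu2) => q lt_q.
have lt_bj := bnd_ltS (ltnW lt_j); have lt_bn := bnd_lt_n lt_j.
rewrite /= in lt_q; have eq_q := eq_decode (b j.+1 - q.+1) (ltac:(lia)).
rewrite /decode (@block_eq j) in eq_q; last lia.
by move: eq_q; have -> : b j.+1 - (b j.+1 - q.+1).+1 = q by lia.
Qed.

Lemma lambda_map_surj mus : in_prod_P mus ->
  exists w : 'S_n, in_W ks w /\ lambda_map ks w = mus.
Proof.
move=> mus_P.
case: (@lehmer_exists (iota 1 n) (decode mus) (iota_uniq 1 n)) => [|s perm_s lehmer_s].
  by rewrite size_iota => p; apply: decode_ub.
rewrite size_iota in lehmer_s; have [w eq_s] := oneline_surj perm_s; subst s.
have wW : in_W ks w.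
  apply/in_W_ascentP => j p le_jp lt_pj.
  have lt_pn : p.+1 < n by apply: leq_trans lt_pj (bnd_le_n _).
  rewrite lehmer_ascentP ?oneline_uniq ?size_oneline // !lehmer_s ?(ltnW lt_pn) //.
  exact: decode_ascent le_jp lt_pj.
exists w; split => //; apply: decode_inj (lambda_map_in_prod_P wW) mus_P _ => p lt_pn.
by rewrite -lehmer_decode // lehmer_s.
Qed.

End Blocks.

Theorem proposition2p3 (n : nat) (ks : seq nat) :
  2 <= n ->
  0 < size ks ->
  sorted ltn (0 :: ks) ->
  all (fun k => k < n) ks ->
  (* each lambda^j(w) is a partition fitting in the (k_j-k_{j-1}) x (n-k_j) box *)
  (forall w : 'S_n, in_W ks w ->
     forall j, 1 <= j <= size ks ->
       is_partition (lambda ks w j) /\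
       fits_in (bnd n ks j - bnd n ks j.-1) (n - bnd n ks j) (lambda ks w j)) /\
  (* the map lands in prod_j P_j *)
  (forall w : 'S_n, in_W ks w ->
     forall j, 1 <= j <= size ks -> in_P n ks j (nth [::] (lambda_map ks w) j.-1)) /\
  (* injective on W^Theta *)
  (forall w1 w2 : 'S_n, in_W ks w1 -> in_W ks w2 ->
     lambda_map ks w1 = lambda_map ks w2 -> w1 = w2) /\
  (* surjective onto prod_j P_j *)
  (forall mus : seq (seq nat), size mus = size ks ->
     (forall j, 1 <= j <= size ks -> in_P n ks j (nth [::] mus j.-1)) ->
     exists w : 'S_n, in_W ks w /\ lambda_map ks w = mus).
Proof.
move=> le2n _ ks_sorted ks_lt_n; have n_gt0 : 0 < n := ltnW le2n.
split; [|split; [|split]].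
- by move=> w wW [//|j] /= lt_j; apply: lambda_partition.
- by move=> w wW [//|j] /= lt_j; apply: (lambda_map_in_prod_P n_gt0 ks_sorted ks_lt_n wW).2.
- by move=> w1 w2; apply: lambda_map_inj.
- move=> mus size_mus mus_P; apply: lambda_map_surj => //.
  by split=> // j lt_j; apply: mus_P j.+1 lt_j.
Qed.
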